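(* Assume (H2.4) and (H3.1). Let $N\in\mathbb{N}$. If the operator $I_{X^{+}}-\mathcal{L}_{N}^{+}\mathcal{F}_{s}V^{+}\colon X^{+}\to X^{+}$ is invertible, then for each $\phi\in\widehat{X}$ the equation $$z=\mathcal{L}_{N}^{+}\mathcal{F}_{s}V(\phi,z)$$ has a unique solution $w^{\ast}\in X^{+}$, the equation $$Z=R_{N}^{+}\mathcal{F}_{s}V(\phi,P_{N}^{+}Z)$$ has a unique solution $Z^{\ast}\in X_{N}^{+}$, and $Z^{\ast}=R_{N}^{+}w^{\ast}$ and $w^{\ast}=P_{N}^{+}Z^{\ast}$ hold.
   Context: Let $d\ge 1$ be an integer and $\tau>0$, $h>0$ real. $X$, $X^{+}$, $X^{\pm}$ are real normed spaces of functions $[-\tau,0]\to\mathbb{R}^{d}$, $[0,h]\to\mathbb{R}^{d}$, $[-\tau,h]\to\mathbb{R}^{d}$, respectively. $V\colon X\times X^{+}\to X^{\pm}$ and $\mathcal{F}_{s}\colon X^{\pm}\to X^{+}$ are linear operators, and $V^{-}\colon X\to X^{\pm}$, $V^{+}\colon X^{+}\to X^{\pm}$ are $V^{-}\phi:=V(\phi,0_{X^{+}})$, $V^{+}z:=V(0_{X},z)$, so that $V(\phi,z)=V^{-}\phi+V^{+}z$. Let $\widetilde{X}^{+}$ be a linear subspace of $X^{+}$. For $N\in\mathbb{N}$, $X_{N}^{+}$ is a finite-dimensional space (identified with $\mathbb{R}^{d(N+1)}$), $R_{N}^{+}\colon\widetilde{X}^{+}\to X_{N}^{+}$ and $P_{N}^{+}\colon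 X_{N}^{+}\to X^{+}$ are linear with $R_{N}^{+}P_{N}^{+}=I_{X_{N}^{+}}$, and $\mathcal{L}_{N}^{+}:=P_{N}^{+}R_{N}^{+}$. Hypothesis (H2.4): there is a linear subspace $\widehat{X}^{+}\subseteq\widetilde{X}^{+}$ with a norm making it complete, such that the range of $\mathcal{F}_{s}V^{+}\colon X^{+}\to X^{+}$ is contained in $\widehat{X}^{+}$ and $\mathcal{F}_{s}V^{+}\colon X^{+}\to\widehat{X}^{+}$ is bounded. Hypothesis (H3.1): there is a linear subspace $\widehat{X}\subseteq X$ with a norm making it complete such that the range of $\mathcal{F}_{s}V^{-}$ restricted to $\widehat{X}$ is contained in $\widehat{X}^{+}$ and $\mathcal{F}_{s}V^{-}|_{\widehat{X}}\colon\widehat{X}\to\widehat{X}^{+}$ is bounded. *)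

From HB Require Import structures.
From mathcomp Require Import all_boot all_order all_algebra.
From mathcomp Require Import all_classical all_reals all_analysis.
Set Implicit Arguments. Unset Strict Implicit. Unset Printing Implicit Defensive.
Import Order.TTheory GRing.Theory Num.Theory.
Import numFieldNormedType.Exports.
Local Open Scope ring_scope.

Definition is_subspace (R : realType) (U : lmodType R) (S : U -> Prop) : Prop :=
  S 0 /\ forall (a : R) (x y : U), S x -> S y -> S (a *: x + y).

Definition linear_on (R : realType) (U W : lmodType R) (S : U -> Prop)
  (f : U -> W) : Prop :=
  forall (a : R) (x y : U), S x -> S y -> f (a *: x + y) = a *: f x + f y.

Definition bounded_op (R : realType) (U W : normedModType R) (f : U -> W) : Prop :=
  exists C : R, forall x : U, `|f x| <= C * `|x|.

From HB Require Import structures.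
From mathcomp Require Import all_boot all_order all_algebra.
From mathcomp Require Import all_classical all_reals all_analysis.
Import Order.TTheory GRing.Theory Num.Theory.
Import numFieldNormedType.Exports.
Set Implicit Arguments. Unset Strict Implicit. Unset Printing Implicit Defensive.
Local Open Scope ring_scope.

(* Since V(phi, z) = V(phi, 0) + V(0, z) and R_N^+ is additive on the range of
   F_s V, the collocation equation z = L_N^+ F_s V(phi, z) is the affine equation
   (I - L_N^+ F_s V^+) z = L_N^+ F_s V(phi, 0), uniquely solvable by hypothesis.
   The discretized equation Z = R_N^+ F_s V(phi, P_N^+ Z) is the fixed-point
   problem of A o P for A := R_N^+ F_s V(phi, .), whereas the first one is that
   of P o A; the maps Z |-> P Z and w |-> A w exchange the fixed points of the
   two composites, which transfers existence and uniqueness. *)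

Section FixedPointsOfComposites.
Variables (U W : Type) (P : W -> U) (A : U -> W).
Hypothesis PA_fixed_uniq : exists! w, w = P (A w).

Lemma AP_fixed_uniq : exists! Z, Z = A (P Z).
Proof.
case: PA_fixed_uniq => w [wP w_uniq]; exists (A w); split; first by rewrite -wP.
move=> Z ZP; rewrite {1}ZP -(w_uniq (P Z)) //.
by rewrite -ZP.
Qed.

Lemma PA_fixed_eq_P_AP_fixed w Z : w = P (A w) -> Z = A (P Z) -> w = P Z.
Proof.
case: PA_fixed_uniq => w0 [_ w_uniq] wP ZP.
by rewrite -(w_uniq _ wP); apply: w_uniq; rewrite -ZP.
Qed.

End FixedPointsOfComposites.

Lemma affine_fixed_point_uniq (U W : zmodType) (P : {additive W -> U})
    (A K : U -> W) (c : W) :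
  (forall w, A w = c + K w) -> bijective (fun w => w - P (K w)) ->
  exists! w, w = P (A w).
Proof.
move=> A_affine [Tinv TK TinvK].
have fixedE w : (w = P (A w)) <-> (w - P (K w) = P c).
  rewrite A_affine raddfD; split => [{1}-> | <-]; first by rewrite addrK.
  by rewrite subrK.
exists (Tinv (P c)); split; first by apply/fixedE; rewrite TinvK.
by move=> w /fixedE <-; rewrite TK.
Qed.

Lemma linear_onD (R : realType) (U W : lmodType R) (S : U -> Prop) (f : U -> W)
    x y : linear_on S f -> S x -> S y -> f (x + y) = f x + f y.
Proof. by move=> f_lin Sx Sy; rewrite -[x]scale1r f_lin // !scale1r. Qed.

Lemma linear_pair_split (R : pzRingType) (U1 U2 W : lmodType R)
    (f : {linear (U1 * U2)%type -> W}) x y : f (x, y) = f (x, 0) + f (0, y).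
Proof.
by rewrite -linearD; congr (f _); apply/pair_equal_spec; rewrite /= addr0 add0r.
Qed.

Theorem corollary4p2 (R : realType) (d N : nat)
  (X Xp Xpm : normedModType R)
  (V : {linear (X * Xp)%type -> Xpm}) (Fs : {linear Xpm -> Xp})
  (Xt : Xp -> Prop) (Xt_sub : is_subspace Xt)
  (RN : Xp -> 'rV[R]_(d * N.+1)) (PN : {linear 'rV[R]_(d * N.+1) -> Xp})
  (RN_lin : linear_on Xt RN)
  (PN_Xt : forall Z, Xt (PN Z))
  (RNPN : forall Z, RN (PN Z) = Z)
  (* (H2.4) *)
  (Xhp : completeNormedModType R) (ihp : {linear Xhp -> Xp})
  (ihp_inj : injective ihp) (ihp_Xt : forall u, Xt (ihp u))
  (G : {linear Xp -> Xhp}) (G_bdd : bounded_op G)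
  (G_def : forall z, ihp (G z) = Fs (V (0, z)))
  (* (H3.1) *)
  (Xh : completeNormedModType R) (ih : {linear Xh -> X})
  (ih_inj : injective ih)
  (H : {linear Xh -> Xhp}) (H_bdd : bounded_op H)
  (H_def : forall psi, ihp (H psi) = Fs (V (ih psi, 0))) :
  bijective (fun z : Xp => z - PN (RN (Fs (V (0, z))))) ->
  forall psi : Xh,
    (exists! w : Xp, w = PN (RN (Fs (V (ih psi, w))))) /\
    (exists! Z : 'rV[R]_(d * N.+1), Z = RN (Fs (V (ih psi, PN Z)))) /\
    (forall (w : Xp) (Z : 'rV[R]_(d * N.+1)),
        w = PN (RN (Fs (V (ih psi, w)))) ->
        Z = RN (Fs (V (ih psi, PN Z))) ->
        Z = RN w /\ w = PN Z).
Proof.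
move=> T_bij psi.
pose A w := RN (Fs (V (ih psi, w))).
have A_affine w : A w = RN (Fs (V (ih psi, 0))) + RN (Fs (V (0, w))).
  rewrite /A linear_pair_split linearD /= -H_def -G_def.
  exact: linear_onD RN_lin (ihp_Xt _) (ihp_Xt _).
have PA_uniq : exists! w, w = PN (A w) := affine_fixed_point_uniq A_affine T_bij.
split; first exact: PA_uniq.
split; first exact: (@AP_fixed_uniq _ _ PN A PA_uniq).
move=> w Z wP ZP; have wPZ := @PA_fixed_eq_P_AP_fixed _ _ PN A PA_uniq w Z wP ZP.
by split=> //; rewrite wPZ RNPN.
Qed.
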